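(* Let $\mathcal{L}$ be the Lie algebra over $\mathbb{C}$ with basis $\{D(s):s\in\mathbb{Z}\}$ and bracket $$[D(s),D(m)]=(m-s)D(s+m)-mD(m)+sD(s).$$ For $m\ge 0$ set $$y_m=\sum_{k=0}^{m+1}(-1)^{m+1-k}\binom{m+1}{k}D(-1+k).$$ (a) For $m\ge 0$, $[D(-1),y_m]=-m\,y_m$. (b) For $m,k\ge 0$, $[y_k,y_m]=(m-k)\,y_{m+k}$.
   Context: $y_m$ is the $(m+1)$-st iterated difference derivative $\partial^{m+1}D$ evaluated at $-1$, where $\partial f(s)=f(s+1)-f(s)$. *)

From mathcomp Require Import all_boot all_order all_algebra.
Set Implicit Arguments. Unset Strict Implicit. Unset Printing Implicit Defensive.
Import Order.TTheory GRing.Theory Num.Theory.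
Local Open Scope ring_scope.

(* The Lie algebra L over a field C (an abstract numClosedFieldType, i.e. a
   model of the complex numbers) with basis {D(s) : s in Z}, realized as the
   free C-vector space on Z: an element is a finite formal linear combination
   [:: (c_1, s_1); ...] meaning sum c_i D(s_i); two elements are equal in L
   iff their coefficient functions [coef] agree. *)
Section LieAlg.
Variable C : numClosedFieldType.

Definition Lelt := seq (C * int).

Definition coef (x : Lelt) (s : int) : C :=
  \sum_(p <- x) (if p.2 == s then p.1 else 0).

Definition Leq (x y : Lelt) : Prop := forall s, coef x s = coef y s.

Definition D (s : int) : Lelt := [:: (1, s)].
Definition Ladd (x y : Lelt) : Lelt := x ++ y.
Definition Lscale (a : C) (x : Lelt) : Lelt := [seq (a * p.1, p.2) | p <- x].

Definition bracket_basis (s m : int) : Lelt :=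
  [:: ((m - s)%:~R, s + m); (- m%:~R, m); (s%:~R, s)].

Definition bracket (x y : Lelt) : Lelt :=
  flatten [seq Lscale (p.1 * q.1) (bracket_basis p.2 q.2) | p <- x, q <- y].

Definition y (m : nat) : Lelt :=
  flatten [seq Lscale ((-1) ^+ (m.+1 - k) * ('C(m.+1, k))%:R) (D (-1 + k%:Z))
          | k <- iota 0 m.+2].

End LieAlg.

From mathcomp Require Import all_boot all_order all_algebra.
From mathcomp Require Import ring zify.
Set Implicit Arguments. Unset Strict Implicit. Unset Printing Implicit Defensive.
Import Order.TTheory GRing.Theory Num.Theory.
Local Open Scope ring_scope.

(* Identify sum_i p_i D(i - 1) with the polynomial sum_i p_i X^i.  Then the
   bracket becomes
     [a, b] = a b' - a' b + a(1) (b - X b') + b(1) (X a' - a),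
   and y_m becomes P_m = (X - 1)^(m+1), which vanishes at 1.  Hence
   [y_k, y_m] is the Wronskian P_k P_m' - P_k' P_m = (m - k) P_(m+k), while
   D(-1) is the polynomial 1 and [1, P_m] = P_m - (X - 1) P_m' = -m P_m. *)

Section PolynomialModel.
Variable C : numClosedFieldType.
Implicit Types (a b p q : {poly C}) (s v : int).

Definition icoef p v : C := if v is Posz n then p`_n else 0.

Definition of_poly p : Lelt C := [seq (p`_i, -1 + i%:Z) | i <- index_iota 0 (size p)].

Definition poly_bracket a b : {poly C} :=
  a * b^`() - a^`() * b + a.[1] *: (b - 'X * b^`()) + b.[1] *: ('X * a^`() - a).

Lemma icoefD p q v : icoef (p + q) v = icoef p v + icoef q v.
Proof. by case: v => n /=; rewrite ?coefD ?addr0. Qed.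

Lemma icoefB p q v : icoef (p - q) v = icoef p v - icoef q v.
Proof. by case: v => n /=; rewrite ?coefB ?subr0. Qed.

Lemma icoefZ c p v : icoef (c *: p) v = c * icoef p v.
Proof. by case: v => n /=; rewrite ?coefZ ?mulr0. Qed.

Lemma icoefXM p v : icoef ('X * p) (v + 1) = icoef p v.
Proof. by case: v => [n|[|n]] //=; rewrite coefXM ?addn1. Qed.

Lemma coefXMderiv p i : ('X * p^`())`_i = p`_i *+ i.
Proof. by rewrite coefXM; case: i => //= i; rewrite coef_deriv. Qed.

Lemma size_XMderiv p : (size ('X * p^`())%R <= size p)%N.
Proof.
by apply/leq_sizeP => i /(nth_default 0) p_i0; rewrite coefXMderiv p_i0 mul0rn.
Qed.

Lemma size_polyB_leq p q N : (size p <= N)%N -> (size q <= N)%N ->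
  (size (p - q)%R <= N)%N.
Proof.
by move=> leN leqN; rewrite (leq_trans (size_polyD _ _)) // size_polyN geq_max leN.
Qed.

Lemma sum_coef_eqz p N v : (size p <= N)%N ->
  \sum_(i < N) p`_i * (i%:Z == v)%:R = icoef p v.
Proof.
move=> leN; case: v => [n|n] /=; last by rewrite big1 // => i _; rewrite mulr0.
rewrite -{2}(take_poly_id leN) /take_poly poly_def coef_sum; apply: eq_bigr => i _.
by rewrite coefZ coefXn eqz_nat eq_sym.
Qed.

Lemma sum_coef_mul_eqz p q M N v : (size p <= M)%N -> (size q <= N)%N ->
  \sum_(i < M) \sum_(j < N) p`_i * q`_j * ((i + j)%:Z == v)%:R = icoef (p * q) v.
Proof.
move=> leM leN; case: v => [n|n] /=; last first.
  by rewrite big1 // => i _; rewrite big1 // => j _; rewrite mulr0.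
rewrite -{2}(take_poly_id leM) -{2}(take_poly_id leN) /take_poly !poly_def.
rewrite big_distrl coef_sum; apply: eq_bigr => i _.
rewrite big_distrr coef_sum; apply: eq_bigr => j _ /=.
by rewrite -scalerAl -scalerAr scalerA -exprD coefZ coefXn eqz_nat eq_sym.
Qed.

Lemma sum_coef_horner1 p N : (size p <= N)%N -> \sum_(i < N) p`_i = p.[1].
Proof.
move=> leN; rewrite (horner_coef_wide 1 leN).
by apply: eq_bigr => i _; rewrite expr1n mulr1.
Qed.

Lemma coef_Lscale c (x : Lelt C) s : coef (Lscale c x) s = c * coef x s.
Proof.
rewrite /coef /Lscale big_map mulr_sumr; apply: eq_bigr => p _ /=.
by case: eqP; rewrite ?mulr0.
Qed.

Lemma coef_bracket (x z : Lelt C) s :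
  coef (bracket x z) s =
  \sum_(p <- x) \sum_(q <- z) p.1 * q.1 * coef (bracket_basis C p.2 q.2) s.
Proof.
rewrite [LHS]/coef /bracket big_flatten /= big_allpairs_dep.
by apply: eq_bigr => p _; apply: eq_bigr => q _; rewrite -coef_Lscale.
Qed.

Lemma coef_bracket_basis_shift (i j : nat) s :
  coef (bracket_basis C (-1 + i%:Z) (-1 + j%:Z)) s =
  ((i + j)%:Z == s + 2)%:R * (j%:R - i%:R) + (j%:Z == s + 1)%:R * (1 - j%:R)
  + (i%:Z == s + 1)%:R * (i%:R - 1).
Proof.
rewrite /coef /bracket_basis !big_cons big_nil /=.
have -> : (-1 + i%:Z + (-1 + j%:Z) == s) = ((i + j)%:Z == s + 2) by apply/eqP/eqP; lia.
have -> : (-1 + j%:Z == s) = (j%:Z == s + 1) by apply/eqP/eqP; lia.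
have -> : (-1 + i%:Z == s) = (i%:Z == s + 1) by apply/eqP/eqP; lia.
by do 3 case: (_ == _); rewrite /= ?(rmorphD, rmorphB, rmorphN) /=; ring.
Qed.

Lemma coef_of_poly p s : coef (of_poly p) s = icoef p (s + 1).
Proof.
rewrite /coef /of_poly big_map big_mkord.
rewrite -(sum_coef_eqz (s + 1) (leqnn (size p))); apply: eq_bigr => i _ /=.
have -> : (-1 + i%:Z == s) = (i%:Z == s + 1) by apply/eqP/eqP; lia.
by case: eqP; rewrite ?mulr1 ?mulr0.
Qed.

Lemma coef_Lscale_of_poly c p s :
  coef (Lscale c (of_poly p)) s = icoef (c *: p) (s + 1).
Proof. by rewrite coef_Lscale coef_of_poly icoefZ. Qed.

Lemma coef_bracket_of_poly a b s :
  coef (bracket (of_poly a) (of_poly b)) s = icoef (poly_bracket a b) (s + 1).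
Proof.
rewrite coef_bracket /of_poly big_map big_mkord.
under eq_bigr => i _ do rewrite big_map big_mkord.
set Da := 'X * a^`(); set Db := 'X * b^`().
have splitE (i : 'I_(size a)) (j : 'I_(size b)) :
  a`_i * b`_j * coef (bracket_basis C (-1 + i%:Z) (-1 + j%:Z)) s =
    a`_i * Db`_j * ((i + j)%:Z == s + 2)%:R
  - Da`_i * b`_j * ((i + j)%:Z == s + 2)%:R
  + a`_i * ((b - Db)`_j * (j%:Z == s + 1)%:R)
  + (Da - a)`_i * (i%:Z == s + 1)%:R * b`_j.
  by rewrite coef_bracket_basis_shift !coefB !coefXMderiv; ring.
under eq_bigr => i _ do under eq_bigr => j _ do rewrite /= splitE.
under eq_bigr => i _ do rewrite !big_split sumrN /= -mulr_sumr -mulr_sumr.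
rewrite !big_split sumrN /= -!mulr_suml.
have leDa : (size Da <= size a)%N := size_XMderiv a.
have leDb : (size Db <= size b)%N := size_XMderiv b.
rewrite (sum_coef_mul_eqz _ (leqnn _) leDb) (sum_coef_mul_eqz _ leDa (leqnn _)).
rewrite !sum_coef_horner1 // (sum_coef_eqz _ (size_polyB_leq (leqnn _) leDb)).
rewrite (sum_coef_eqz _ (size_polyB_leq leDa (leqnn _))) -icoefB.
rewrite (_ : a * Db - Da * b = 'X * (a * b^`() - a^`() * b)); last first.
  by rewrite /Da /Db; ring.
rewrite (_ : s + 2 = s + 1 + 1) ?icoefXM -?addrA //.
by rewrite /poly_bracket -/Da -/Db !(icoefB, icoefD, icoefZ); ring.
Qed.

Definition ypoly m : {poly C} := ('X - 1%:P) ^+ m.+1.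

Lemma size_ypoly m : size (ypoly m) = m.+2.
Proof. exact: size_exp_XsubC. Qed.

Lemma horner_ypoly1 m : (ypoly m).[1] = 0.
Proof. by rewrite /ypoly horner_exp hornerXsubC subrr expr0n. Qed.

Lemma deriv_ypoly m : (ypoly m)^`() = m.+1%:R *: ('X - 1%:P) ^+ m.
Proof. by rewrite /ypoly deriv_exp derivXsubC mul1r scaler_nat. Qed.

Lemma poly_bracket_1_ypoly m : poly_bracket 1 (ypoly m) = - m%:R *: ypoly m.
Proof.
rewrite /poly_bracket horner_ypoly1 derivC hornerC deriv_ypoly /ypoly.
by rewrite scale0r scale1r scaleNr !scaler_nat exprS; ring.
Qed.

Lemma poly_bracket_ypoly k m :
  poly_bracket (ypoly k) (ypoly m) = (m%:Z - k%:Z)%:~R *: ypoly (m + k).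
Proof.
rewrite /poly_bracket !horner_ypoly1 !scale0r !addr0 !deriv_ypoly /ypoly.
by rewrite scaler_int !scaler_nat -addSn exprD !exprS; ring.
Qed.

Lemma coef_ypoly m i : (i < m.+2)%N ->
  (ypoly m)`_i = (-1) ^+ (m.+1 - i) * 'C(m.+1, i)%:R.
Proof.
move=> lt_i; rewrite /ypoly addrC exprDn.
rewrite (_ : \sum_(j < _) _ = \poly_(j < m.+2) ((-1) ^+ (m.+1 - j) *+ 'C(m.+1, j))).
  by rewrite coef_poly lt_i mulr_natr.
rewrite poly_def; apply: eq_bigr => j _.
by rewrite -polyCN -rmorphXn mul_polyC scalerMnl.
Qed.

Lemma y_of_poly m : y C m = of_poly (ypoly m).
Proof.
rewrite /y /of_poly size_ypoly -[RHS]flatten_map1; congr flatten.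
apply/eq_in_map => i; rewrite mem_iota add0n => /= lt_i.
by rewrite /Lscale /D /= mulr1 coef_ypoly.
Qed.

Lemma D_of_poly : D C (-1) = of_poly 1.
Proof. by rewrite /of_poly size_poly1 /= coefC addr0. Qed.

End PolynomialModel.

Theorem lemma4 (C : numClosedFieldType) :
  (forall m : nat,
     Leq (bracket (D C (-1)) (y C m)) (Lscale (- (m%:R)) (y C m))) /\
  (forall m k : nat,
     Leq (bracket (y C k) (y C m)) (Lscale ((m%:Z - k%:Z)%:~R) (y C (m + k)))).
Proof.
split=> [m|m k] s; rewrite ?D_of_poly !y_of_poly.
all: rewrite coef_bracket_of_poly coef_Lscale_of_poly.
- by rewrite poly_bracket_1_ypoly.
- by rewrite poly_bracket_ypoly.
Qed.
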